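(* Let $n\in\mathbb{N}$, $K>0$, $\Gamma\ge0$, and let $f:[-K,K]^n\to\mathbb{R}$ be $\Gamma$-Lipschitz with respect to $\|\cdot\|_\infty$. Then for every $\epsilon>0$ there exists a discrete-time LIF-SNN $\Phi$ with direct encoding, membrane potential output, $T=1$, $L=2$ and hidden-layer widths $n_1=\big(\max\{\lceil\frac{2K}{\epsilon}\Gamma\rceil,1\}+1\big)n$, $n_2=\max\{\lceil\frac{2K\Gamma}{\epsilon}\rceil^n,1\}$, such that $\sup_{x\in[-K,K]^n}|R(\Phi)(x)-f(x)|\le\epsilon$.
   Context: A function $f$ is $\Gamma$-Lipschitz w.r.t. $\|\cdot\|_\infty$ if $|f(x)-f(y)|\le\Gamma\max_i|x_i-y_i|$ for all $x,y$. A discrete-time LIF-SNN with parameters $W^\ell\in\mathbb{R}^{n_\ell\times n_{\ell-1}}$, $b^\ell\in\mathbb{R}^{n_\ell}$, $u^\ell(0)\in\mathbb{R}^{n_\ell}$, $\beta^\ell\in[0,1]$, $\vartheta^\ell>0$ ($n_0=n$) and direct encoding ($s^0(t)=x$ for all $t\in[T]$) computes $s^\ell(t)=H(\beta^\ell u^\ell(t-1)+W^\ell s^{\ell-1}(t)+b^\ell-\vartheta^\ell\mathbf{1})$, $u^\ell(t)=\beta^\ell u^\ell(t-1)+W^\ell s^{\ell-1}(t)+b^\ell-\vartheta^\ell s^\ell(t)$, $\ell\in[L]$, $t\in[T]$, with $H$ the entrywise Heaviside function ($H(z)=1$ iff $z\ge0$); with membrane potential output its realization is $R(\Phi)(x)=\sum_{t=1}^Ta_t(Vs^L(t)+c)$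 for $a\in\mathbb{R}^T$, $V\in\mathbb{R}^{1\times n_L}$, $c\in\mathbb{R}$. *)

From mathcomp Require Import all_boot all_order all_algebra.
From mathcomp Require Import reals.
Set Implicit Arguments. Unset Strict Implicit. Unset Printing Implicit Defensive.
Import Order.TTheory GRing.Theory Num.Theory.
Local Open Scope ring_scope.

Section LIFSNN.
Variables (R : realType) (n : nat) (ws : nat -> nat).

Definition dim (l : nat) : nat := if l is l'.+1 then ws l' else n.

(* A discrete-time LIF-SNN with L layers. Layers are 0-indexed here:
   index l corresponds to layer l+1 of the paper (W^{l+1}, b^{l+1}, ...). *)
Record lif_snn (L : nat) := LIFSNN {
  W     : forall l : nat, 'M[R]_(dim l.+1, dim l);
  bias  : forall l : nat, 'cV[R]_(dim l.+1);
  u0    : forall l : nat, 'cV[R]_(dim l.+1);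
  beta  : nat -> R;
  theta : nat -> R;
  a_out : nat -> R;           (* a_t, t = 1..T *)
  V_out : 'rV[R]_(dim L);
  c_out : R }.

Definition lif_valid L (N : lif_snn L) : Prop :=
  forall l, (l < L)%N -> 0 <= beta N l <= 1 /\ 0 < theta N l.

Definition heav m (v : 'cV[R]_m) : 'cV[R]_m :=
  map_mx (fun z : R => if 0 <= z then 1 else 0) v.

Section Dyn.
Variables (L : nat) (N : lif_snn L).

Definition preact (uprev : forall l, 'cV[R]_(dim l.+1)) l (s : 'cV[R]_(dim l))
  : 'cV[R]_(dim l.+1) :=
  beta N l *: uprev l + W N l *m s + bias N l.

Fixpoint spk (uprev : forall l, 'cV[R]_(dim l.+1)) (x : 'cV[R]_n) (l : nat)
  : 'cV[R]_(dim l) :=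
  match l return 'cV[R]_(dim l) with
  | 0 => x
  | l'.+1 => heav (preact uprev (spk uprev x l') - theta N l' *: const_mx 1)
  end.

Definition newpot (uprev : forall l, 'cV[R]_(dim l.+1)) (x : 'cV[R]_n) l
  : 'cV[R]_(dim l.+1) :=
  preact uprev (spk uprev x l) - theta N l *: spk uprev x l.+1.

Fixpoint pot (x : 'cV[R]_n) (t : nat) : forall l, 'cV[R]_(dim l.+1) :=
  match t with
  | 0 => u0 N
  | t'.+1 => newpot (pot x t') x
  end.

(* s^l(t), t >= 1 *)
Definition spikes (x : 'cV[R]_n) (t l : nat) : 'cV[R]_(dim l) :=
  spk (pot x t.-1) x l.

Definition realize (T : nat) (x : 'cV[R]_n) : R :=
  \sum_(1 <= t < T.+1) a_out N t * ((V_out N *m spikes x t L) 0 0 + c_out N).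
End Dyn.
End LIFSNN.

Definition linf_norm (R : realType) (n : nat) (v : 'cV[R]_n) : R :=
  \big[Num.max/0]_(i < n) `|v i 0|.

Definition in_box (R : realType) (n : nat) (K : R) (x : 'cV[R]_n) : Prop :=
  forall i : 'I_n, - K <= x i 0 <= K.

(* Cut the box [-K, K]^n into m^n half-open cubes of side 2K/m, with
   m = max(ceil(2K Gamma / eps), 1).  With T = 1 and zero initial potentials
   a LIF neuron is just a Heaviside unit.  The first layer tests, for every
   coordinate i and grid level j, whether x_i reaches the j-th threshold; a
   second-layer neuron per cube adds up the differences of consecutive tests,
   which reach n exactly when x lies in that cube.  So exactly one cube neuron
   fires, and the readout returns f at the corner of that cube, which is
   within Gamma * 2K/m <= eps of f(x). *)

From Pilot Require Import Defs.
From mathcomp Require Import all_boot all_order all_algebra.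
From mathcomp Require Import reals.
From mathcomp Require Import lra.
Set Implicit Arguments. Unset Strict Implicit. Unset Printing Implicit Defensive.
Import Order.TTheory GRing.Theory Num.Theory.
Local Open Scope ring_scope.

Definition thr (R : numDomainType) (z : R) : R := if 0 <= z then 1 else 0.

Definition thr_layer (R : numDomainType) (I J : finType)
    (W : J -> I -> R) (b : J -> R) (s : I -> R) (j : J) : R :=
  thr (\sum_i W j i * s i + b j).

Lemma sum_delta_mull (R : numDomainType) (I : finType) (j : I) (F : I -> R) :
  \sum_i (i == j)%:R * F i = F j.
Proof.
rewrite (bigD1 j) //= eqxx mul1r big1 ?addr0 // => i /negbTE->.
by rewrite mul0r.
Qed.

Lemma thr_sum_indicator (R : numDomainType) (I : finType) (b : pred I) :
  thr (\sum_i (b i)%:R - #|I|%:R) = [forall i, b i]%:R :> R.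
Proof.
have sumE : \sum_(i : I) 1 = #|I|%:R :> R by rewrite sumr_const.
rewrite /thr subr_ge0 -sumE; case: (boolP [forall i, b i]) => [/forallP all_b|].
  by rewrite [X in _ <= X](eq_bigr (fun=> 1)) ?lexx // => i _; rewrite all_b.
move=> /forallPn[i0 /negbTE b_i0]; rewrite ifF //; apply: lt_geF.
rewrite (bigD1 i0) //= b_i0 add0r [X in _ < X](bigD1 i0) //= ltr_pwDl ?ltr01 //.
by apply: ler_sum => i _; rewrite lern1 leq_b1.
Qed.

Lemma maxn_expn1 (a k : nat) : maxn (a ^ k) 1 = (maxn a 1 ^ k)%N.
Proof.
case: a => [|a]; last by rewrite (maxn_idPl (ltn0Sn a)); apply/maxn_idPl; rewrite expn_gt0.
by rewrite max0n exp1n; case: k => [|k] //; rewrite exp0n.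
Qed.

Section EnumCast.
Variables (T : finType) (k : nat).
Hypothesis card_k : #|T| = k.

Definition enum_cast (r : 'I_k) : T := enum_val (cast_ord (esym card_k) r).

Lemma big_enum_cast (V : nmodType) (F : T -> V) :
  \sum_(r < k) F (enum_cast r) = \sum_t F t.
Proof.
rewrite [RHS](reindex enum_cast) //; exists (fun t => cast_ord card_k (enum_rank t)).
  by move=> r _; rewrite /enum_cast enum_valK cast_ordKV.
by move=> t _; rewrite /enum_cast cast_ordK enum_rankK.
Qed.

End EnumCast.

Section ThresholdNetwork.
Variables (R : realType) (n n1 n2 : nat) (P C : finType).
Hypotheses (cardP : #|P| = n1) (cardC : #|C| = n2).
Variables (W0 : P -> 'I_n -> R) (b0 : P -> R) (W1 : C -> P -> R) (b1 : C -> R).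
Variables (V : C -> R) (c : R).

Local Notation ws := (fun l => nth 0%N [:: n1; n2] l).
Local Notation ordP := (enum_cast cardP).
Local Notation ordC := (enum_cast cardC).

Definition net_W (l : nat) : 'M[R]_(Defs.dim n ws l.+1, Defs.dim n ws l) :=
  match l with
  | 0 => \matrix_(r, i) W0 (ordP r) i
  | 1 => \matrix_(q, r) W1 (ordC q) (ordP r)
  | _.+2 => 0
  end.

(* The biases absorb the firing threshold [theta = 1]. *)
Definition net_bias (l : nat) : 'cV[R]_(Defs.dim n ws l.+1) :=
  match l with
  | 0 => \col_r (b0 (ordP r) + 1)
  | 1 => \col_q (b1 (ordC q) + 1)
  | _.+2 => 0
  end.

Definition threshold_net : lif_snn R n ws 2 :=
  @LIFSNN _ _ _ 2 net_W net_bias (fun _ => 0) (fun _ => 0) (fun _ => 1) (fun _ => 1)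
    (\row_q V (ordC q)) c.

Lemma threshold_net_valid : lif_valid threshold_net.
Proof. by move=> l _; rewrite /= lexx ler01 ltr01. Qed.

Lemma realize_threshold_net x :
  realize threshold_net 1 x =
  \sum_q V q * thr_layer W1 b1 (thr_layer W0 b0 (fun i => x i 0)) q + c.
Proof.
rewrite /realize big_nat1 mul1r /spikes /= /preact /= !scale0r !add0r !scale1r.
rewrite mxE -(big_enum_cast cardC); congr (_ + _); apply: eq_bigr => q _.
rewrite !mxE /thr_layer /thr -(big_enum_cast cardP) addrA addrK.
by under eq_bigr do (rewrite !mxE addrA addrK; under eq_bigr do rewrite mxE).
Qed.

End ThresholdNetwork.

Section Grid.
Variables (R : realType) (n m : nat) (K : R).
Hypotheses (K_gt0 : 0 < K) (m_gt0 : (0 < m)%N).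

Definition mesh : R := 2 * K / m%:R.
Definition grid (k : nat) : R := - K + k%:R * mesh.

(* [thresh m] lies above the box, so that the last cell is closed on the right. *)
Definition thresh (k : nat) : R := if (k < m)%N then grid k else K + 1.

Local Notation cell := {ffun 'I_n -> 'I_m}.
Implicit Types (x : 'cV[R]_n) (c : cell).

Definition corner c : 'cV[R]_n := \col_i grid (c i).

Definition in_slab (k : nat) (t : R) : bool := thresh k <= t < thresh k.+1.

Definition in_cell x c : bool := [forall i, in_slab (c i) (x i 0)].

Lemma mesh_gt0 : 0 < mesh.
Proof. by rewrite divr_gt0 ?ltr0n ?mulr_gt0. Qed.

Lemma grid0 : grid 0 = - K.
Proof. by rewrite /grid mul0r addr0. Qed.

Lemma grid_max : grid m = K.
Proof. by rewrite /grid /mesh mulrCA divff ?pnatr_eq0 -?lt0n // mulr1; lra. Qed.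

Lemma gridS k : grid k.+1 = grid k + mesh.
Proof. by rewrite /grid -addn1 natrD mulrDl mul1r addrA. Qed.

Lemma grid_homo : {homo grid : i j / (i <= j)%N >-> i <= j}.
Proof. by move=> i j ij; rewrite lerD2l ler_wpM2r ?ler_nat ?ltW ?mesh_gt0. Qed.

Lemma thresh_homo : {homo thresh : i j / (i <= j)%N >-> i <= j}.
Proof.
have grid_lt i : (i < m)%N -> grid i < K + 1.
  by move=> /ltnW /grid_homo; rewrite grid_max => /le_lt_trans; apply; lra.
move=> i j ij; have [jm|mj] := ltnP j m.
  by rewrite /thresh jm (leq_ltn_trans ij jm) grid_homo.
rewrite [thresh j]/thresh ltnNge mj /= /thresh.
by case: ifP => [/grid_lt/ltW|].
Qed.

Lemma exists_slab (t : R) : - K <= t <= K ->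
  exists k : 'I_m, in_slab k t.
Proof.
move=> /andP[Kt tK]; pose below j := (j < m)%N && (thresh j <= t).
have below0 : below 0%N by rewrite /below m_gt0 /thresh m_gt0 grid0.
have below_le j : below j -> (j <= m)%N by case/andP=> /ltnW.
case: (ex_maxnP (ex_intro below 0%N below0) below_le) => k /andP[km tk] k_max.
exists (Ordinal km); rewrite /in_slab /= tk ltNge; apply/negP => tk1.
case: (ltnP k.+1 m) => [k1m | mk1].
  by have := k_max k.+1; rewrite /below k1m tk1 ltnn => /(_ isT).
by move: tk1; rewrite /thresh ltnNge mk1 /=; lra.
Qed.

Lemma in_slab_uniq (t : R) (k k' : nat) : in_slab k t -> in_slab k' t -> k = k'.
Proof.
have above a b : (a < b)%N -> thresh b <= t -> thresh a.+1 <= t.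
  by move=> ab; apply: le_trans (thresh_homo ab).
move=> /andP[tk tk1] /andP[tk' tk'1].
by case: (ltngtP k k') => // [/above/(_ tk')|/above/(_ tk)]; rewrite leNgt ?tk1 ?tk'1.
Qed.

Lemma in_slab_grid (k : 'I_m) (t : R) : t <= K -> in_slab k t ->
  grid k <= t <= grid k.+1.
Proof.
move=> tK /andP[]; rewrite /thresh ltn_ord => -> /=.
case: ltnP => [_ /ltW // | m_le _].
by rewrite (_ : k.+1 = m) ?grid_max //; apply/eqP; rewrite eqn_leq ltn_ord m_le.
Qed.

Lemma exists_cell x : in_box K x -> exists c, in_cell x c.
Proof.
move=> x_box; have [k k_slab] := fin_all_exists (fun i => exists_slab (x_box i)).
by exists [ffun i => k i]; apply/forallP => i; rewrite ffunE.
Qed.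

Lemma in_cell_uniq x c c' : in_cell x c -> in_cell x c' -> c = c'.
Proof.
move=> /forallP x_c /forallP x_c'; apply/ffunP => i; apply/val_inj.
exact: in_slab_uniq (x_c i) (x_c' i).
Qed.

Lemma corner_in_box c : in_box K (corner c).
Proof.
move=> i; rewrite mxE -grid0 grid_homo //= -[X in _ <= X]grid_max.
by rewrite grid_homo // ltnW.
Qed.

Lemma in_cell_dist x c : in_box K x -> in_cell x c ->
  linf_norm (corner c - x) <= mesh.
Proof.
move=> x_box /forallP x_c; apply/bigmax_leP; split=> [|i _]; first exact/ltW/mesh_gt0.
have /andP[_ xK] := x_box i; have /andP[lo] := in_slab_grid xK (x_c i).
by rewrite gridS !mxE ler_norml => hi; apply/andP; split; lra.
Qed.

Local Notation node := ('I_m.+1 * 'I_n)%type.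

Definition slab_W (p : node) (i : 'I_n) : R := (i == p.2)%:R.
Definition slab_b (p : node) : R := - thresh p.1.
Definition cell_W (c : cell) (p : node) : R :=
  (p.1 == widen_ord (leqnSn m) (c p.2))%:R - (p.1 == lift ord0 (c p.2))%:R.
Definition cell_b (c : cell) : R := - n%:R.

Lemma thr_slab_diff (t : R) (k : nat) :
  thr (t - thresh k) - thr (t - thresh k.+1) = (in_slab k t)%:R.
Proof.
rewrite /thr /in_slab !subr_ge0; case: (lerP (thresh k.+1) t) => [k1t | _].
  by rewrite (le_trans (thresh_homo (leqnSn k)) k1t) subrr andbF.
by rewrite subr0 andbT; case: (thresh k <= t).
Qed.

Lemma slab_layerE x p :
  thr_layer slab_W slab_b (fun i => x i 0) p = thr (x p.2 0 - thresh p.1).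
Proof. by rewrite /thr_layer sum_delta_mull. Qed.

Lemma cell_W_sum x c :
  \sum_p cell_W c p * thr (x p.2 0 - thresh p.1) =
  \sum_i (in_slab (c i) (x i 0))%:R.
Proof.
pose F j i := cell_W c (j, i) * thr (x i 0 - thresh j).
rewrite (eq_bigr (fun p => F p.1 p.2)) => [|[] //].
rewrite -pair_bigA exchange_big; apply: eq_bigr => i _ /=.
under eq_bigr do rewrite /F /cell_W /= mulrBl.
by rewrite sumrB !sum_delta_mull lift0 thr_slab_diff.
Qed.

Lemma cell_layerE x c :
  thr_layer cell_W cell_b (thr_layer slab_W slab_b (fun i => x i 0)) c =
  (in_cell x c)%:R.
Proof.
rewrite {1}/thr_layer; under eq_bigr do rewrite slab_layerE.
rewrite cell_W_sum /cell_b -[X in - X%:R](card_ord n).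
by rewrite thr_sum_indicator.
Qed.

Lemma grid_net_approx (Gamma : R) (f : 'cV[R]_n -> R) : 0 <= Gamma ->
  (forall x y : 'cV[R]_n, in_box K x -> in_box K y ->
     `|f x - f y| <= Gamma * linf_norm (x - y)) ->
  exists N : lif_snn R n (fun l => nth 0%N [:: (m.+1 * n)%N; (m ^ n)%N] l) 2,
    lif_valid N /\
    forall x, in_box K x -> `|realize N 1 x - f x| <= Gamma * mesh.
Proof.
move=> Gamma_ge0 f_lip.
have card_node : #|{: node}| = (m.+1 * n)%N by rewrite card_prod !card_ord.
have card_cell : #|{: cell}| = (m ^ n)%N by rewrite card_ffun !card_ord.
pose N := threshold_net card_node card_cell slab_W slab_b cell_W cell_b
  (fun c => f (corner c)) 0.
exists N; split=> [|x x_box]; first exact: threshold_net_valid.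
have [c x_c] := exists_cell x_box.
rewrite realize_threshold_net addr0; under eq_bigr do rewrite cell_layerE.
rewrite (bigD1 c) //= x_c mulr1 big1 ?addr0 => [|c' c'_c]; last first.
  suff -> : in_cell x c' = false by rewrite mulr0.
  by apply: contraNF c'_c => /(in_cell_uniq x_c) ->.
apply: le_trans (f_lip _ _ (corner_in_box c) x_box) _.
by rewrite ler_wpM2l // in_cell_dist.
Qed.

End Grid.

Theorem corollaryB9 (R : realType) (n : nat) (K Gamma : R) (f : 'cV[R]_n -> R) :
  0 < K -> 0 <= Gamma ->
  (forall x y : 'cV[R]_n, in_box K x -> in_box K y ->
     `|f x - f y| <= Gamma * linf_norm (x - y)) ->
  forall eps : R, 0 < eps ->
  let n1 := ((absz (Num.max (Num.ceil (2 * K / eps * Gamma)) 1)).+1 * n)%N in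
  let n2 := maxn ((absz (Num.ceil (2 * K * Gamma / eps))) ^ n) 1 in
  exists N : lif_snn R n (fun l => nth 0%N [:: n1; n2] l) 2,
    lif_valid N /\
    forall x : 'cV[R]_n, in_box K x -> `|realize N 1 x - f x| <= eps.
Proof.
move=> K_gt0 Gamma_ge0 f_lip eps eps_gt0 n1 n2.
have y_ge0 : 0 <= 2 * K / eps * Gamma.
  by rewrite !mulr_ge0 ?invr_ge0 // ltW.
have [k zE] : exists k : nat, Num.ceil (2 * K / eps * Gamma) = k%:Z.
  exists (absz (Num.ceil (2 * K / eps * Gamma))).
  by rewrite gez0_abs // ceil_ge0 (lt_le_trans _ y_ge0) ?ltrN10.
pose m := maxn k 1.
have m_gt0 : (0 < m)%N by rewrite leq_max orbT.
have n1E : n1 = (m.+1 * n)%N.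
  by rewrite /n1 zE /m; case: (k).
have n2E : n2 = (m ^ n)%N by rewrite /n2 -mulrAC zE maxn_expn1.
have mesh_le : Gamma * mesh m K <= eps.
  have y_le : 2 * K / eps * Gamma <= m%:R.
    by rewrite (le_trans (ceil_ge _)) // zE ler_nat leq_maxl.
  rewrite /mesh mulrA ler_pdivrMr ?ltr0n //.
  by move: y_le; rewrite mulrAC ler_pdivrMr // [Gamma * _]mulrC [eps * _]mulrC.
have [N [N_valid N_approx]] := grid_net_approx K_gt0 m_gt0 Gamma_ge0 f_lip.
rewrite n1E n2E; exists N; split=> // x x_box.
exact: le_trans (N_approx x x_box) mesh_le.
Qed.
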